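(* Let $\Bbbk$ be a field of characteristic zero, $S=\Bbbk[x_1,\ldots,x_5]$, and let $I = (x_1^3,\dots , x_5^3, x_1^2x_2, x_1x_2^2)$ and $J = (x_1^3,\dots , x_5^3, x_1^2x_2, x_1x_2^2,x_3x_4x_5)$. Then $S/I$ and $S/J$ both fail the WLP in degree $4$.
   Context: For a monomial ideal $I$, $A=S/I$ fails the WLP in degree $i$ if $\times(x_1+\cdots+x_5): A_i\to A_{i+1}$ is neither injective nor surjective. *)

From mathcomp Require Import all_boot all_algebra.
From mathcomp Require Import mpoly.
Set Implicit Arguments. Unset Strict Implicit. Unset Printing Implicit Defensive.
Import GRing.Theory.
Local Open Scope ring_scope.

Definition in_ideal (F : fieldType) (n : nat) (gs : seq {mpoly F[n]})
    (f : {mpoly F[n]}) : Prop :=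
  exists c : 'I_(size gs) -> {mpoly F[n]}, f = \sum_(i < size gs) c i * gs`_i.

Definition lin_form (F : fieldType) (n : nat) : {mpoly F[n]} :=
  \sum_(i < n) 'X_i.

(* A = S/(gs); multiplication by l : A_d -> A_(d+1) is injective,
   written out on representatives: a homogeneous f of degree d with
   l*f = 0 in A satisfies f = 0 in A. *)
Definition mult_injective (F : fieldType) (n : nat) (gs : seq {mpoly F[n]})
    (l : {mpoly F[n]}) (d : nat) : Prop :=
  forall f : {mpoly F[n]}, f \is d.-homog ->
    in_ideal gs (l * f) -> in_ideal gs f.

(* multiplication by l : A_d -> A_(d+1) is surjective: every class of a
   homogeneous g of degree d+1 is l times the class of some homogeneous f
   of degree d. *)
Definition mult_surjective (F : fieldType) (n : nat) (gs : seq {mpoly F[n]})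
    (l : {mpoly F[n]}) (d : nat) : Prop :=
  forall g : {mpoly F[n]}, g \is d.+1.-homog ->
    exists f : {mpoly F[n]}, f \is d.-homog /\ in_ideal gs (g - l * f).

Definition fails_WLP_in_degree (F : fieldType) (n : nat)
    (gs : seq {mpoly F[n]}) (d : nat) : Prop :=
  ~ mult_injective gs (lin_form F n) d /\ ~ mult_surjective gs (lin_form F n) d.

(* variables x_1..x_5 are 'X_0 .. 'X_4 *)
Definition x5 (F : fieldType) (i : nat) : {mpoly F[5]} := 'X_(inord i).

Definition gens_I (F : fieldType) : seq {mpoly F[5]} :=
  [:: x5 F 0 ^+ 3; x5 F 1 ^+ 3; x5 F 2 ^+ 3; x5 F 3 ^+ 3; x5 F 4 ^+ 3;
      x5 F 0 ^+ 2 * x5 F 1; x5 F 0 * x5 F 1 ^+ 2].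

Definition gens_J (F : fieldType) : seq {mpoly F[5]} :=
  gens_I F ++ [:: x5 F 2 * x5 F 3 * x5 F 4].

(* For each of the two ideals we give a quartic f outside the ideal with
   l f inside it, l = x1 + ... + x5, so l : A_4 -> A_5 is not injective; and
   a linear form on quintics vanishing on the ideal and on l S_4 but not on a
   monomial, so l : A_4 -> A_5 is not surjective.  The quartics turn l f into
   combinations of sums of cubes; the linear form is the pairing with an
   element of the Macaulay inverse system annihilated by contraction with l.
   Every certificate has integer coefficients and the obstructions are
   coefficients equal to 1, so no hypothesis on the characteristic is used. *)

From HB Require Import structures.
From mathcomp Require Import all_boot all_algebra.
From mathcomp Require Import mpoly.
From mathcomp Require Import ring.
Set Implicit Arguments. Unset Strict Implicit. Unset Printing Implicit Defensive.
Import GRing.Theory.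
Local Open Scope ring_scope.

(* Exponent vectors are lists of naturals, read as multinomials by [mnm_of],
   so that the finite checks below evaluate by [vm_compute], which gets stuck
   on the enumeration of ['I_n]. *)
Section ExponentVectors.
Variable n : nat.
Local Open Scope nat_scope.

Definition mnm_of (s : seq nat) : 'X_{1..n} := [multinom nth 0 s i | i < n].

Definition exps_rel (r : rel nat) (s t : seq nat) :=
  all (fun j => r (nth 0 s j) (nth 0 t j)) (iota 0 n).

Lemma exps_relP (r : rel nat) s t :
  reflect (forall i, r (mnm_of s i) (mnm_of t i)) (exps_rel r s t).
Proof.
apply: (iffP allP) => [h i | h j].
  by rewrite !mnmE; apply: h; rewrite mem_iota ltn_ord.
by rewrite mem_iota add0n => lt_jn; have := h (Ordinal lt_jn); rewrite !mnmE.
Qed.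

Lemma mnm_of_le s t : (mnm_of s <= mnm_of t)%MM = exps_rel leq s t.
Proof. exact/sameP/exps_relP/mnm_lepP. Qed.

Lemma mnm_of_eq s t : (mnm_of s == mnm_of t) = exps_rel eqn s t.
Proof.
apply/eqP/exps_relP => [-> i | h]; first exact: eqxx.
by apply/mnmP => i; apply/eqP/h.
Qed.

Definition exps_dec (s : seq nat) k := [seq nth 0 s j - (j == k) | j <- iota 0 n].

Lemma lep1_mnm_of (k : 'I_n) s : (U_(k) <= mnm_of s)%MM = (0 < nth 0 s k).
Proof. by rewrite lep1mP mnmE lt0n. Qed.

Lemma mnm_of_dec (k : 'I_n) s : (mnm_of s - U_(k))%MM = mnm_of (exps_dec s k).
Proof.
apply/mnmP => i; rewrite mnmBE !mnmE (nth_map 0) ?size_iota // nth_iota // add0n.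
by rewrite eq_sym.
Qed.

Definition weight (L : seq (int * seq nat)) (s : seq nat) : int :=
  foldr (fun p w => if exps_rel eqn p.2 s then (p.1 + w)%R else w) 0%R L.

End ExponentVectors.

(* A list [L] of pairs [(c, s)] stands both for the polynomial
   [sum c x^s] and for the linear form [f |-> sum c f@_s], i.e. the pairing
   of [f] with the inverse-system element [sum c Y^s]. *)
Section MonomialCombinations.
Variables (F : fieldType) (n : nat).
Implicit Types (f h : {mpoly F[n]}) (L : seq (int * seq nat)).

Definition poly_of L : {mpoly F[n]} := \sum_(p <- L) p.1%:~R *: 'X_[mnm_of n p.2].

Lemma mcoeff_poly_of L s : (poly_of L)@_(mnm_of n s) = (weight n L s)%:~R.
Proof.
elim: L => [|p L IHL]; first by rewrite /poly_of big_nil mcoeff0.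
rewrite /poly_of big_cons mcoeffD -/(poly_of L) IHL mcoeffZ mcoeffX mnm_of_eq /=.
by case: ifP; rewrite ?mulr1 ?mulr0 ?add0r ?rmorphD.
Qed.

Definition coef_form L f : F := \sum_(p <- L) p.1%:~R * f@_(mnm_of n p.2).

Lemma coef_form_is_zmod_morphism L : zmod_morphism (coef_form L).
Proof.
move=> f h; rewrite /coef_form -sumrB; apply: eq_bigr => p _.
by rewrite mcoeffB mulrBr.
Qed.

HB.instance Definition _ L :=
  GRing.isZmodMorphism.Build {mpoly F[n]} F (coef_form L) (coef_form_is_zmod_morphism L).

Lemma coef_formZ L c f : coef_form L (c *: f) = c * coef_form L f.
Proof.
rewrite /coef_form mulr_sumr; apply: eq_bigr => p _.
by rewrite mcoeffZ mulrCA.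
Qed.

Lemma coef_form_mpolyX L s : coef_form L 'X_[mnm_of n s] = (weight n L s)%:~R.
Proof.
elim: L => [|p L IHL]; first by rewrite /coef_form big_nil.
rewrite /coef_form big_cons -/(coef_form L _) IHL mcoeffX eq_sym mnm_of_eq /=.
by case: ifP; rewrite ?mulr1 ?mulr0 ?add0r ?rmorphD.
Qed.

Lemma coef_form_eq0 L f :
  all (fun s => weight n L s == 0) (unzip2 L) -> coef_form L f = 0.
Proof.
move=> /allP L0; rewrite [f]mpolyE raddf_sum big1 // => m _ /=.
rewrite coef_formZ; suff -> : coef_form L 'X_[m] = 0 by rewrite mulr0.
case: (boolP (has (fun s => mnm_of n s == m) (unzip2 L))).
  by case/hasP => s Ls /eqP <-; rewrite coef_form_mpolyX (eqP (L0 s Ls)).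
move/hasPn => notL; rewrite /coef_form big1_seq // => p /andP [_ Lp].
by rewrite mcoeffX eq_sym (negbTE (notL _ (map_f snd Lp))) mulr0.
Qed.

Lemma mcoeffMX_eq0 f m k : ~~ (m <= k)%MM -> (f * 'X_[m])@_k = 0.
Proof.
move=> m_k; apply: memN_msupp_eq0; apply: contra m_k.
by rewrite (perm_mem (msuppMX f m)) => /mapP [m' _ ->]; apply: lem_addr.
Qed.

Lemma mcoeffXM_mnm_of (k : 'I_n) f s :
  ('X_k * f)@_(mnm_of n s) =
    if (0 < nth 0 s k)%N then f@_(mnm_of n (exps_dec n s k)) else 0.
Proof.
rewrite mulrC -lep1_mnm_of; case: ifP => [le_ks | /negbT ?]; last exact: mcoeffMX_eq0.
by rewrite -mnm_of_dec -{1}(submK le_ks) addmC mcoeffMX.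
Qed.

Definition exps_shift L k :=
  [seq (p.1, exps_dec n p.2 k) | p <- L & (0 < nth 0 p.2 k)%N].

Lemma coef_formXM L (k : 'I_n) f :
  coef_form L ('X_k * f) = coef_form (exps_shift L k) f.
Proof.
elim: L => [|p L IHL]; first by rewrite /coef_form !big_nil.
rewrite /coef_form big_cons mcoeffXM_mnm_of /exps_shift /=.
case: ifP => _; rewrite ?big_cons -!/(coef_form _ _) IHL //.
by rewrite mulr0 add0r.
Qed.

Definition contract_lin L := flatten [seq exps_shift L k | k <- iota 0 n].

Lemma coef_form_lin_formM L f :
  coef_form L (lin_form F n * f) = coef_form (contract_lin L) f.
Proof.
rewrite /lin_form mulr_suml raddf_sum /=.
under eq_bigr => k _ do rewrite coef_formXM.
rewrite -(big_mkord xpredT (fun k => coef_form (exps_shift L k) f)) /index_iota subn0.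
by rewrite [RHS]/coef_form big_flatten big_map.
Qed.

Definition monomial_gens (E : seq (seq nat)) : seq {mpoly F[n]} :=
  [seq 'X_[mnm_of n e] | e <- E].

Lemma mcoeff_monomial_ideal E h u :
  in_ideal (monomial_gens E) h -> all (fun e => ~~ exps_rel n leq e u) E ->
  h@_(mnm_of n u) = 0.
Proof.
case=> c -> /allP Eu; rewrite raddf_sum big1 //= => i _.
have lt_iE : (i < size E)%N.
  by rewrite -(size_map (fun e => 'X_[mnm_of n e] : {mpoly F[n]})).
by rewrite (nth_map [::]) // mcoeffMX_eq0 // mnm_of_le Eu ?mem_nth.
Qed.

Lemma coef_form_monomial_ideal E L h :
  in_ideal (monomial_gens E) h ->
  all (fun p => all (fun e => ~~ exps_rel n leq e p.2) E) L -> coef_form L h = 0.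
Proof.
move=> Eh /allP EL; rewrite /coef_form big1_seq // => p /andP [_ /EL Ep].
by rewrite (mcoeff_monomial_ideal Eh Ep) mulr0.
Qed.

End MonomialCombinations.

Section WLPFailure.
Variables (F : fieldType) (n d : nat) (gs : seq {mpoly F[n]}) (l : {mpoly F[n]}).

Lemma not_mult_injective f :
  f \is d.-homog -> in_ideal gs (l * f) -> ~ in_ideal gs f -> ~ mult_injective gs l d.
Proof. by move=> df Ilf Inf inj; apply/Inf/inj. Qed.

Lemma not_mult_surjective (phi : {additive {mpoly F[n]} -> F}) g :
  g \is d.+1.-homog -> (forall h, in_ideal gs h -> phi h = 0) ->
  (forall f, phi (l * f) = 0) -> phi g != 0 -> ~ mult_surjective gs l d.
Proof.
move=> dg phiI phil phig surj; have [f [_ I_glf]] := surj g dg.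
by move: (phiI _ I_glf) phig; rewrite raddfB phil subr0 => ->; rewrite eqxx.
Qed.

End WLPFailure.

Section MonomialIdeals.
Variables (F : fieldType) (n : nat) (E : seq (seq nat)).

Lemma not_in_monomial_ideal f u :
  all (fun e => ~~ exps_rel n leq e u) E -> f@_(mnm_of n u) != 0 ->
  ~ in_ideal (monomial_gens F n E) f.
Proof. by move=> Eu fu /mcoeff_monomial_ideal /(_ Eu) fu0; rewrite fu0 eqxx in fu. Qed.

Lemma monomial_not_mult_surjective L t d :
  mdeg (mnm_of n t) = d.+1 ->
  all (fun p => all (fun e => ~~ exps_rel n leq e p.2) E) L ->
  all (fun s => weight n (contract_lin n L) s == 0) (unzip2 (contract_lin n L)) ->
  (weight n L t)%:~R != 0 :> F ->
  ~ mult_surjective (monomial_gens F n E) (lin_form F n) d.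
Proof.
move=> deg_t EL contract0 Lt.
apply: (@not_mult_surjective _ _ _ _ _ (coef_form L) 'X_[mnm_of n t]).
- by rewrite dhomogX /= deg_t.
- by move=> h Ih; apply: coef_form_monomial_ideal Ih EL.
- by move=> f; rewrite /= coef_form_lin_formM coef_form_eq0.
- by rewrite /= coef_form_mpolyX.
Qed.

End MonomialIdeals.

Definition mul_combs (L1 L2 : seq (int * seq nat)) : seq (int * seq nat) :=
  [seq (p.1 * q.1, p.2 ++ q.2) | p <- L1, q <- L2].

Definition exps_I : seq (seq nat) :=
  [:: [:: 3; 0; 0; 0; 0]; [:: 0; 3; 0; 0; 0]; [:: 0; 0; 3; 0; 0]; [:: 0; 0; 0; 3; 0];
      [:: 0; 0; 0; 0; 3]; [:: 2; 1; 0; 0; 0]; [:: 1; 2; 0; 0; 0]]%N.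

Definition exps_J : seq (seq nat) := exps_I ++ [:: [:: 0; 0; 1; 1; 1]%N].

(* (Y1^2 - Y1 Y2 + Y2^2) * D(Y3, Y4, Y5), with D the Vandermonde alternant:
   contraction by x1 + x2 kills the first factor, by x3 + x4 + x5 the second.
   Its exponents are at most 2, its (Y1, Y2)-part has degree 2 and each of its
   monomials misses one of Y3, Y4, Y5, so no generator of J divides them. *)
Definition inverse_form : seq (int * seq nat) :=
  mul_combs [:: (1, [:: 2; 0]%N); (-1, [:: 1; 1]%N); (1, [:: 0; 2]%N)]
    [:: (1, [:: 0; 1; 2]%N); (-1, [:: 0; 2; 1]%N); (-1, [:: 1; 0; 2]%N);
        (1, [:: 1; 2; 0]%N); (1, [:: 2; 0; 1]%N); (-1, [:: 2; 1; 0]%N)].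

Section FiveVariables.
Variable F : fieldType.
Local Notation x := (x5 F).

Lemma x5E (k : 'I_5) : x k = 'X_k.
Proof. by rewrite /x5 inord_val. Qed.

Lemma x5_homog i : x i \is 1.-homog.
Proof. by rewrite dhomogX /= mdeg1. Qed.

Lemma mpolyX_mnm_of5 s :
  'X_[mnm_of 5 s] = x 0 ^+ nth 0%N s 0 * x 1 ^+ nth 0%N s 1 * x 2 ^+ nth 0%N s 2 *
                    x 3 ^+ nth 0%N s 3 * x 4 ^+ nth 0%N s 4.
Proof. by rewrite mpolyXE_id !big_ord_recr big_ord0 /= mul1r !mnmE -!x5E. Qed.

Lemma lin_form5 : lin_form F 5 = x 0 + x 1 + x 2 + x 3 + x 4.
Proof. by rewrite /lin_form !big_ord_recr big_ord0 /= add0r -!x5E. Qed.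

Lemma gens_I_monomial : gens_I F = monomial_gens F 5 exps_I.
Proof. by rewrite /monomial_gens /= !mpolyX_mnm_of5 /= !expr0 !expr1 !mulr1 !mul1r. Qed.

Lemma gens_J_monomial : gens_J F = monomial_gens F 5 exps_J.
Proof.
rewrite /gens_J gens_I_monomial /monomial_gens map_cat; congr (_ ++ _).
by rewrite /= mpolyX_mnm_of5 /= expr0 !expr1 !mul1r.
Qed.

Lemma inverse_form_not_mult_surjective E :
  all (fun p => all (fun e => ~~ exps_rel 5 leq e p.2) E) inverse_form ->
  ~ mult_surjective (monomial_gens F 5 E) (lin_form F 5) 4.
Proof.
move=> E_inv; apply: (monomial_not_mult_surjective (t := [:: 2; 0; 0; 1; 2]%N) _ E_inv).
- by rewrite mdegE !big_ord_recr big_ord0 /= !mnmE.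
- by vm_compute.
- by rewrite (_ : weight _ _ _ = 1) ?oner_neq0 //; vm_compute.
Qed.

(* With a = x1 + x2: l = (a + x3) + (x4 + x5) and (u + v)(u^2 - u v + v^2) =
   u^3 + v^3, while a^3 lies in I. *)
Definition witness_I : {mpoly F[5]} :=
  let a := x 0 + x 1 in
  (a ^+ 2 - a * x 2 + x 2 ^+ 2) * (x 3 ^+ 2 - x 3 * x 4 + x 4 ^+ 2).

(* (x3 + x4 + x5)(x3^2 + x4^2 + x5^2 - x3 x4 - x3 x5 - x4 x5) =
   x3^3 + x4^3 + x5^3 - 3 x3 x4 x5, and (x1 + x2) x2^2 lies in J. *)
Definition witness_J : {mpoly F[5]} :=
  x 1 ^+ 2 * (x 2 ^+ 2 + x 3 ^+ 2 + x 4 ^+ 2 - x 2 * x 3 - x 2 * x 4 - x 3 * x 4).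

Lemma witness_I_homog : witness_I \is 4.-homog.
Proof.
apply: (@dhomogM _ _ _ 2 _ 2); rewrite !expr2;
  repeat (rewrite ?dhomogN; apply: dhomogD || apply: (@dhomogM _ _ _ 1 _ 1));
  exact: x5_homog.
Qed.

Lemma witness_J_homog : witness_J \is 4.-homog.
Proof.
apply: (@dhomogM _ _ _ 2 _ 2); rewrite !expr2;
  repeat (rewrite ?dhomogN; apply: dhomogD || apply: (@dhomogM _ _ _ 1 _ 1));
  exact: x5_homog.
Qed.

Lemma lin_form_witness_I : in_ideal (gens_I F) (lin_form F 5 * witness_I).
Proof.
pose P := (x 0 + x 1) ^+ 2 - (x 0 + x 1) * x 2 + x 2 ^+ 2.
pose Q := x 3 ^+ 2 - x 3 * x 4 + x 4 ^+ 2.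
exists (fun i : 'I_7 => nth 0 [:: Q; Q; Q; P; P; 3%:R * Q; 3%:R * Q] i).
by rewrite !big_ord_recr big_ord0 /= lin_form5 /witness_I /P /Q; ring.
Qed.

Lemma lin_form_witness_J : in_ideal (gens_J F) (lin_form F 5 * witness_J).
Proof.
pose q := x 2 ^+ 2 + x 3 ^+ 2 + x 4 ^+ 2 - x 2 * x 3 - x 2 * x 4 - x 3 * x 4.
pose b := x 1 ^+ 2.
exists (fun i : 'I_8 => nth 0 [:: 0; q; b; b; b; 0; q; - 3%:R * b] i).
by rewrite !big_ord_recr big_ord0 /= lin_form5 /witness_J /q /b; ring.
Qed.

Lemma witness_I_expand :
  witness_I = poly_of F 5 (mul_combs
    [:: (1, [:: 2; 0; 0]%N); (2, [:: 1; 1; 0]%N); (1, [:: 0; 2; 0]%N);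
        (-1, [:: 1; 0; 1]%N); (-1, [:: 0; 1; 1]%N); (1, [:: 0; 0; 2]%N)]
    [:: (1, [:: 2; 0]%N); (-1, [:: 1; 1]%N); (1, [:: 0; 2]%N)]).
Proof.
rewrite /poly_of /= !big_cons big_nil !mpolyX_mnm_of5 /= /witness_I !scaler_int.
ring.
Qed.

Lemma witness_J_expand :
  witness_J = poly_of F 5 (mul_combs [:: (1, [:: 0; 2]%N)]
    [:: (1, [:: 2; 0; 0]%N); (1, [:: 0; 2; 0]%N); (1, [:: 0; 0; 2]%N);
        (-1, [:: 1; 1; 0]%N); (-1, [:: 1; 0; 1]%N); (-1, [:: 0; 1; 1]%N)]).
Proof.
rewrite /poly_of /= !big_cons big_nil !mpolyX_mnm_of5 /= /witness_J !scaler_int.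
ring.
Qed.

Lemma witness_I_notin : ~ in_ideal (gens_I F) witness_I.
Proof.
rewrite gens_I_monomial witness_I_expand.
apply: (not_in_monomial_ideal (u := [:: 0; 0; 2; 0; 2]%N)); first by vm_compute.
by rewrite mcoeff_poly_of (_ : weight _ _ _ = 1) ?oner_neq0 //; vm_compute.
Qed.

Lemma witness_J_notin : ~ in_ideal (gens_J F) witness_J.
Proof.
rewrite gens_J_monomial witness_J_expand.
apply: (not_in_monomial_ideal (u := [:: 0; 2; 0; 0; 2]%N)); first by vm_compute.
by rewrite mcoeff_poly_of (_ : weight _ _ _ = 1) ?oner_neq0 //; vm_compute.
Qed.

Lemma gens_I_fails_WLP : fails_WLP_in_degree (gens_I F) 4.
Proof.
split; first exact: not_mult_injective witness_I_homog lin_form_witness_I witness_I_notin.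
by rewrite gens_I_monomial; apply: inverse_form_not_mult_surjective; vm_compute.
Qed.

Lemma gens_J_fails_WLP : fails_WLP_in_degree (gens_J F) 4.
Proof.
split; first exact: not_mult_injective witness_J_homog lin_form_witness_J witness_J_notin.
by rewrite gens_J_monomial; apply: inverse_form_not_mult_surjective; vm_compute.
Qed.

End FiveVariables.

Theorem lemma4p7 (F : fieldType) (hchar : [pchar F] =i pred0) :
  fails_WLP_in_degree (gens_I F) 4 /\ fails_WLP_in_degree (gens_J F) 4.
Proof. by split; [apply: gens_I_fails_WLP | apply: gens_J_fails_WLP]. Qed.
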